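(* Let $(k_n)$ be a sequence of positive integers with $2^{k_n}/n\to\infty$. Then, under the conditional distribution given $X_n^*=2^{k_n}$, \[ \frac{S_n}{X_n^*}-\frac{n k_n}{2^{k_n}}\xrightarrow{\ \mathbb{P}\ }1 , \] i.e. for every $\varepsilon>0$, $\mathbb{P}\big\{\big|\frac{S_n}{X_n^*}-\frac{nk_n}{2^{k_n}}-1\big|>\varepsilon\ \big|\ X_n^*=2^{k_n}\big\}\to0$.
   Context: $X_1,X_2,\ldots$ are iid with $\mathbb{P}\{X_i=2^k\}=2^{-k}$, $k\in\{1,2,\ldots\}$; $S_n=\sum_{i\le n}X_i$, $X_n^*=\max_{i\le n}X_i$. *)

From Stdlib Require Import Reals Lra List.
Import ListNotations.
Open Scope R_scope.

(* X_i = 2^(e_i) with P{e_i = e} = 2^{-e}, e >= 1.  Conditionally on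
   X_n^* = 2^k, every exponent lies in {1,...,k}, so all relevant events
   are determined by the finite set of exponent vectors in {1..k}^n. *)

Fixpoint tuples (n k : nat) : list (list nat) :=
  match n with
  | O => [nil]
  | S m => flat_map (fun e => map (cons e) (tuples m k)) (seq 1 k)
  end.

(* probability of the outcome (X_1..X_n) = (2^e_1..2^e_n) : prod 2^{-e_i} *)
Definition weight (l : list nat) : R :=
  fold_right (fun e acc => (/2) ^ e * acc) 1 l.

Definition Ssum (l : list nat) : R :=
  fold_right (fun e acc => 2 ^ e + acc) 0 l.

Definition maxexp (l : list nat) : nat := fold_right Nat.max 0%nat l.

Definition Rsum_list (l : list R) : R := fold_right Rplus 0 l.

(* P{ A and X_n^* = 2^k } for an event A depending on the exponent vector *)
Definition prob_max (n k : nat) (A : list nat -> Prop)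
  (Adec : forall l, {A l} + {~ A l}) : R :=
  Rsum_list (map (fun l => if Nat.eq_dec (maxexp l) k
                           then if Adec l then weight l else 0 else 0)
                 (tuples n k)).

Definition cond_prob (n k : nat) (A : list nat -> Prop)
  (Adec : forall l, {A l} + {~ A l}) : R :=
  prob_max n k A Adec / prob_max n k (fun _ => True) (fun _ => left I).

Definition dev_event (n k : nat) (eps : R) (l : list nat) : Prop :=
  Rabs (Ssum l / 2 ^ k - INR n * INR k / 2 ^ k - 1) > eps.

Definition dev_event_dec (n k : nat) (eps : R) :
  forall l, {dev_event n k eps l} + {~ dev_event n k eps l} :=
  fun l => Rgt_dec _ _.

From Stdlib Require Import Reals Lra Lia List Psatz.
Open Scope R_scope.

(* Proof strategy (a second-moment argument).  Let C = #{i : X_i = 2^k} and T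
   the sum of the other X_i, so S_n = C 2^k + T.  On {X_n^* = 2^k} we have
   C >= 1, and for C = 1 a deviation means |T - n k| > eps 2^k.  With E[.] the
   integral over {X_n^* <= 2^k}:
     P{dev, X_n^* = 2^k} <= E[C (T - n k)^2] / (eps 2^k)^2 + E[C (C - 1)],
     P{X_n^* = 2^k}      >= E[C] - E[C (C - 1)] / 2          (Bonferroni).
   All three moments follow from the exchangeability identity
   E_(n+1)[C g(C, T)] = (n+1) 2^(-k) E_n[g(C+1, T)] and the moments of one
   coordinate truncated below 2^k (mean k - 1, second moment 2^k - 2). *)

Fixpoint sumL {A : Type} (L : list A) (f : A -> R) : R :=
  match L with nil => 0 | x :: L' => f x + sumL L' f end.

Lemma Rsum_list_map {A : Type} (L : list A) (f : A -> R) :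
  Rsum_list (map f L) = sumL L f.
Proof. unfold Rsum_list; induction L as [|x L IH]; simpl; congruence. Qed.

Lemma sumL_app {A : Type} (L1 L2 : list A) f :
  sumL (L1 ++ L2) f = sumL L1 f + sumL L2 f.
Proof. induction L1 as [|x L IH]; simpl; [ring | rewrite IH; ring]. Qed.

Lemma sumL_map {A B : Type} (h : A -> B) L f :
  sumL (map h L) f = sumL L (fun x => f (h x)).
Proof. induction L as [|x L IH]; simpl; [ring | rewrite IH; ring]. Qed.

Lemma sumL_flat_map {A B : Type} (g : A -> list B) L f :
  sumL (flat_map g L) f = sumL L (fun x => sumL (g x) f).
Proof. induction L as [|x L IH]; simpl; [ring | rewrite sumL_app, IH; ring]. Qed.

Lemma sumL_ext_in {A : Type} (L : list A) f g :
  (forall x, In x L -> f x = g x) -> sumL L f = sumL L g.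
Proof.
  induction L as [|x L IH]; intro H; simpl; [ring|].
  rewrite (H x), IH; [ring | | now left].
  intros y Hy; apply H; now right.
Qed.

Lemma sumL_le {A : Type} (L : list A) f g :
  (forall x, In x L -> f x <= g x) -> sumL L f <= sumL L g.
Proof.
  induction L as [|x L IH]; intro H; simpl; [lra|].
  apply Rplus_le_compat; [apply H; now left | apply IH; intros y Hy; apply H; now right].
Qed.

Lemma sumL_plus {A : Type} (L : list A) f g :
  sumL L (fun x => f x + g x) = sumL L f + sumL L g.
Proof. induction L as [|x L IH]; simpl; [ring | rewrite IH; ring]. Qed.

Lemma sumL_scal {A : Type} (L : list A) c f :
  sumL L (fun x => c * f x) = c * sumL L f.
Proof. induction L as [|x L IH]; simpl; [ring | rewrite IH; ring]. Qed.

Lemma sumL_scal_r {A : Type} (L : list A) c f :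
  sumL L (fun x => f x * c) = sumL L f * c.
Proof. induction L as [|x L IH]; simpl; [ring | rewrite IH; ring]. Qed.

Lemma sumL_const {A : Type} (L : list A) c :
  sumL L (fun _ => c) = INR (length L) * c.
Proof.
  induction L as [|x L IH]; simpl length; [simpl; ring|].
  rewrite S_INR; simpl; rewrite IH; ring.
Qed.

Lemma sumL_seq_last j f : sumL (seq 1 (S j)) f = sumL (seq 1 j) f + f (S j).
Proof. rewrite seq_S, sumL_app. simpl. ring. Qed.

(* [E k n f] = E[f(e_1,...,e_n); X_n^* <= 2^k]: on this event the exponent vector
   ranges over [tuples n k] and has probability [weight]. *)
Definition E (k n : nat) (f : list nat -> R) : R :=
  sumL (tuples n k) (fun l => weight l * f l).

Lemma weight_nonneg l : 0 <= weight l.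
Proof.
  induction l as [|e l IH]; simpl; [lra|].
  apply Rmult_le_pos; [apply pow_le; lra | exact IH].
Qed.

Lemma E_nil k f : E k 0 f = f nil.
Proof. unfold E; simpl. ring. Qed.

(* The first coordinate is independent of the others: integrate it out first. *)
Lemma E_cons k n f :
  E k (S n) f = sumL (seq 1 k) (fun e => (/2) ^ e * E k n (fun l => f (e :: l))).
Proof.
  unfold E. cbn [tuples]. rewrite sumL_flat_map. apply sumL_ext_in; intros e _.
  rewrite sumL_map, <- sumL_scal. apply sumL_ext_in; intros l _.
  change (weight (e :: l)) with ((/2) ^ e * weight l). ring.
Qed.

Lemma E_ext k n f g : (forall l, f l = g l) -> E k n f = E k n g.
Proof. intro H; apply sumL_ext_in; intros l _; now rewrite H. Qed.

Lemma E_le k n f g :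
  (forall l, In l (tuples n k) -> f l <= g l) -> E k n f <= E k n g.
Proof.
  intro H; apply sumL_le; intros l Hl.
  apply Rmult_le_compat_l; [apply weight_nonneg | auto].
Qed.

Lemma E_plus k n f g : E k n (fun l => f l + g l) = E k n f + E k n g.
Proof. unfold E; rewrite <- sumL_plus; apply sumL_ext_in; intros; ring. Qed.

Lemma E_scal k n c f : E k n (fun l => c * f l) = c * E k n f.
Proof. unfold E; rewrite <- sumL_scal; apply sumL_ext_in; intros; ring. Qed.

Definition is_top (k e : nat) : R := if Nat.eq_dec e k then 1 else 0.
Definition low_part (k e : nat) : R := if Nat.eq_dec e k then 0 else 2 ^ e.

(* C = number of coordinates at the top level k, and T = sum of the other X_i. *)
Definition top_count (k : nat) (l : list nat) : R := INR (count_occ Nat.eq_dec l k).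

Fixpoint low_sum (k : nat) (l : list nat) : R :=
  match l with nil => 0 | e :: l' => low_part k e + low_sum k l' end.

Lemma top_count_nil k : top_count k nil = 0.
Proof. reflexivity. Qed.

Lemma top_count_cons k e l : top_count k (e :: l) = is_top k e + top_count k l.
Proof. unfold top_count, is_top; simpl. destruct (Nat.eq_dec e k); [rewrite S_INR|]; ring. Qed.

Lemma Ssum_split k l : Ssum l = top_count k l * 2 ^ k + low_sum k l.
Proof.
  induction l as [|e l IH]; [unfold Ssum; simpl; rewrite top_count_nil; ring|].
  change (Ssum (e :: l)) with (2 ^ e + Ssum l).
  rewrite IH, top_count_cons. simpl. unfold is_top, low_part.
  destruct (Nat.eq_dec e k); [subst|]; ring.
Qed.

Lemma top_coord_shift k e (h : R -> R -> R) c t :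
  is_top k e * h (is_top k e + c) (low_part k e + t) = is_top k e * h (c + 1) t.
Proof.
  unfold is_top, low_part; destruct (Nat.eq_dec e k); [|ring].
  now rewrite Rplus_0_l, (Rplus_comm 1 c).
Qed.

Lemma coords_below_top j e :
  In e (seq 1 j) -> is_top (S j) e = 0 /\ low_part (S j) e = 2 ^ e.
Proof.
  intro He; apply in_seq in He. unfold is_top, low_part.
  destruct (Nat.eq_dec e (S j)); [lia | auto].
Qed.

Lemma coord_mass k : sumL (seq 1 k) (fun e => (/2) ^ e) = 1 - / 2 ^ k.
Proof.
  induction k as [|j IH]; [simpl; field|].
  rewrite sumL_seq_last, IH, pow_inv. simpl. field. apply pow_nonzero; lra.
Qed.

Lemma coord_top k : (1 <= k)%nat ->
  sumL (seq 1 k) (fun e => (/2) ^ e * is_top k e) = / 2 ^ k.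
Proof.
  intro Hk; destruct k as [|j]; [lia|].
  rewrite sumL_seq_last, (sumL_ext_in _ _ (fun _ => 0)), sumL_const, pow_inv.
  - unfold is_top; destruct (Nat.eq_dec (S j) (S j)); [ring | congruence].
  - intros e He; now rewrite (proj1 (coords_below_top j e He)), Rmult_0_r.
Qed.

Lemma half_pow_cancel e : (/2) ^ e * 2 ^ e = 1.
Proof. rewrite <- Rpow_mult_distr, Rinv_l, pow1; lra. Qed.

(* E[2^e ; e < k] = k - 1: each level below k contributes 2^(-e) 2^e = 1. *)
Lemma coord_mean k : (1 <= k)%nat ->
  sumL (seq 1 k) (fun e => (/2) ^ e * low_part k e) = INR k - 1.
Proof.
  intro Hk; destruct k as [|j]; [lia|].
  rewrite sumL_seq_last, (sumL_ext_in _ _ (fun _ => 1)), sumL_const, length_seq, S_INR.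
  - unfold low_part; destruct (Nat.eq_dec (S j) (S j)); [ring | congruence].
  - intros e He; now rewrite (proj2 (coords_below_top j e He)), half_pow_cancel.
Qed.

Lemma geometric_sum j : sumL (seq 1 j) (fun e => 2 ^ e) = 2 ^ S j - 2.
Proof. induction j as [|j IH]; [simpl; ring|]. rewrite sumL_seq_last, IH. simpl. ring. Qed.

(* E[(2^e)^2 ; e < k] = 2 + 4 + ... + 2^(k-1) = 2^k - 2. *)
Lemma coord_second k : (1 <= k)%nat ->
  sumL (seq 1 k) (fun e => (/2) ^ e * low_part k e ^ 2) = 2 ^ k - 2.
Proof.
  intro Hk; destruct k as [|j]; [lia|].
  rewrite sumL_seq_last, (sumL_ext_in _ _ (fun e => 2 ^ e)), geometric_sum.
  - unfold low_part; destruct (Nat.eq_dec (S j) (S j)); [ring | congruence].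
  - intros e He; rewrite (proj2 (coords_below_top j e He)).
    replace ((2 ^ e) ^ 2) with (2 ^ e * 2 ^ e) by ring.
    now rewrite <- Rmult_assoc, half_pow_cancel, Rmult_1_l.
Qed.

Lemma E_mass k n c : E k n (fun _ => c) = c * (1 - / 2 ^ k) ^ n.
Proof.
  induction n as [|n IH]; [rewrite E_nil; simpl; ring|].
  rewrite E_cons, IH, sumL_scal_r, coord_mass. simpl. ring.
Qed.

(* Exchangeability identity: weighting by C amounts to forcing one of the
   n+1 coordinates to the top level, which has probability 2^(-k). *)
Lemma E_size_biased k n (g : R -> R -> R) : (1 <= k)%nat ->
  E k (S n) (fun l => top_count k l * g (top_count k l) (low_sum k l))
  = INR (S n) * / 2 ^ k * E k n (fun l => g (top_count k l + 1) (low_sum k l)).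
Proof.
  intro Hk; revert g; induction n as [|n IH]; intro g.
  - rewrite E_cons, E_nil.
    rewrite (sumL_ext_in _ _ (fun e => (/2) ^ e * is_top k e * g (0 + 1) 0)).
    + rewrite sumL_scal_r, coord_top by exact Hk. rewrite top_count_nil. simpl. ring.
    + intros e _. rewrite E_nil, top_count_cons. simpl. rewrite top_count_nil.
      rewrite Rmult_plus_distr_r, top_coord_shift. ring.
  - set (M := E k (S n) (fun l => g (top_count k l + 1) (low_sum k l))).
    rewrite E_cons.
    rewrite (sumL_ext_in _ _ (fun e => (/2) ^ e * is_top k e * M
       + INR (S n) * / 2 ^ k * ((/2) ^ e * E k n (fun l =>
           g (is_top k e + (top_count k l + 1)) (low_part k e + low_sum k l))))).
    + rewrite sumL_plus, sumL_scal_r, sumL_scal, coord_top by exact Hk.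
      replace (sumL _ _) with M.
      * rewrite (S_INR (S n)). ring.
      * unfold M; rewrite E_cons. apply sumL_ext_in; intros e _. f_equal.
        apply E_ext; intro l. rewrite top_count_cons. simpl. f_equal. ring.
    + intros e _.
      pose proof (IH (fun c t => g (is_top k e + c) (low_part k e + t))) as IHe.
      cbv beta in IHe.
      rewrite (E_ext _ _ _ (fun l => is_top k e * g (top_count k l + 1) (low_sum k l)
          + top_count k l * g (is_top k e + top_count k l) (low_part k e + low_sum k l))).
      * rewrite E_plus, E_scal, IHe. fold M. ring.
      * intro l. rewrite top_count_cons. simpl.
        now rewrite Rmult_plus_distr_r, top_coord_shift.
Qed.

(* Second moment of T around a point a, by induction on n, using the mean
   k - 1 and second moment 2^k - 2 of a single coordinate and P{e <= k} <= 1. *)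
Lemma E_low_sum_sq k n a : (1 <= k)%nat ->
  E k n (fun l => (low_sum k l - a) ^ 2)
  <= INR n * (2 ^ k - 2) + (INR n * (INR k - 1) - a) ^ 2.
Proof.
  intro Hk; revert a; induction n as [|n IH]; intro a; [rewrite E_nil; simpl; lra|].
  set (b := INR n * (INR k - 1) - a).
  assert (Hw : 2 <= 2 ^ k).
  { destruct k as [|j]; [lia|]. simpl. pose proof (pow_R1_Rle 2 j). lra. }
  assert (Hr : 0 < / 2 ^ k) by (apply Rinv_0_lt_compat, pow_lt; lra).
  rewrite E_cons.
  eapply Rle_trans.
  { apply sumL_le; intros e _. apply Rmult_le_compat_l; [apply pow_le; lra|].
    rewrite (E_ext _ _ _ (fun l => (low_sum k l - (a - low_part k e)) ^ 2))
      by (intro l; simpl; f_equal; ring).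
    apply IH. }
  rewrite (sumL_ext_in _ _ (fun e => (/2) ^ e * (INR n * (2 ^ k - 2) + b ^ 2)
      + ((2 * b) * ((/2) ^ e * low_part k e) + (/2) ^ e * low_part k e ^ 2)))
    by (intros e _; unfold b; ring).
  rewrite sumL_plus, sumL_plus, sumL_scal_r, sumL_scal, coord_mass, coord_mean,
    coord_second by exact Hk.
  rewrite S_INR.
  assert (0 <= / 2 ^ k * (INR n * (2 ^ k - 2) + b ^ 2))
    by (apply Rmult_le_pos; [lra | pose proof (pos_INR n); nra]).
  replace ((INR n + 1) * (INR k - 1) - a) with (b + (INR k - 1)) by (subst b; ring).
  pose proof (pow2_ge_0 (INR k - 1)).
  nra.
Qed.

Lemma bernoulli_ineq r m : 0 <= r <= 1 -> 1 - INR m * r <= (1 - r) ^ m.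
Proof.
  intro H; induction m as [|m IH]; [simpl; lra|].
  rewrite S_INR. simpl. pose proof (pos_INR m). nra.
Qed.

(* E[C] = n 2^(-k) (1 - 2^(-k))^(n-1), hence these two-sided bounds. *)
Lemma E_top_count_bounds k n : (1 <= k)%nat ->
  INR n / 2 ^ k * (1 - (INR n - 1) / 2 ^ k) <= E k n (top_count k) <= INR n / 2 ^ k.
Proof.
  intro Hk. destruct n as [|m]; [rewrite E_nil, top_count_nil; simpl; lra|].
  pose proof (E_size_biased k m (fun _ _ => 1) Hk) as Hsb; cbv beta in Hsb.
  rewrite (E_ext _ _ _ (fun l => top_count k l * 1)), Hsb, E_mass by (intro; ring).
  assert (Hr : 0 < / 2 ^ k <= 1).
  { split; [apply Rinv_0_lt_compat, pow_lt; lra|].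
    rewrite <- Rinv_1. apply Rinv_le_contravar; [lra | apply pow_R1_Rle; lra]. }
  pose proof (bernoulli_ineq (/ 2 ^ k) m ltac:(lra)).
  pose proof (pow_incr (1 - / 2 ^ k) 1 m ltac:(lra)) as Hle; rewrite pow1 in Hle.
  assert (0 <= INR (S m) / 2 ^ k) by (unfold Rdiv; pose proof (pos_INR (S m)); nra).
  rewrite S_INR in *. unfold Rdiv in *. split; nra.
Qed.

Lemma E_top_pairs k n : (1 <= k)%nat ->
  E k n (fun l => top_count k l * (top_count k l - 1)) <= (INR n / 2 ^ k) ^ 2.
Proof.
  intro Hk. destruct n as [|m]; [rewrite E_nil, top_count_nil; simpl; lra|].
  pose proof (E_size_biased k m (fun c _ => c - 1) Hk) as Hsb; cbv beta in Hsb.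
  rewrite Hsb, (E_ext _ _ _ (top_count k)) by (intro; ring).
  destruct (E_top_count_bounds k m Hk) as [_ Hup].
  assert (0 <= / 2 ^ k) by (apply Rlt_le, Rinv_0_lt_compat, pow_lt; lra).
  assert (Hpos : 0 <= INR (S m) * / 2 ^ k) by (pose proof (pos_INR (S m)); nra).
  apply Rle_trans with (INR (S m) * / 2 ^ k * (INR m / 2 ^ k)).
  - now apply Rmult_le_compat_l.
  - rewrite S_INR in *. unfold Rdiv. nra.
Qed.

Lemma prob_max_as_E n k A (Adec : forall l, {A l} + {~ A l}) :
  prob_max n k A Adec
  = E k n (fun l => if Nat.eq_dec (maxexp l) k then if Adec l then 1 else 0 else 0).
Proof.
  unfold prob_max, E. rewrite Rsum_list_map. apply sumL_ext_in; intros l _.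
  destruct (Nat.eq_dec (maxexp l) k); [destruct (Adec l)|]; ring.
Qed.

Lemma tuples_bounded n k l e : In l (tuples n k) -> In e l -> (e <= k)%nat.
Proof.
  revert l; induction n as [|n IH]; intros l Hl He; simpl in Hl.
  - destruct Hl as [<-|[]]; destruct He.
  - apply in_flat_map in Hl as [e0 [He0 Hl]]. apply in_map_iff in Hl as [l' [<- Hl']].
    destruct He as [<-|He]; [apply in_seq in He0; lia | eauto].
Qed.

Lemma maxexp_In l : (1 <= maxexp l)%nat -> In (maxexp l) l.
Proof.
  induction l as [|e l IH]; simpl; [lia|].
  change (fold_right Nat.max 0%nat l) with (maxexp l). intro H.
  destruct (Nat.max_spec e (maxexp l)) as [[_ Hm] | [_ Hm]]; rewrite Hm in *.
  - right; auto.
  - now left.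
Qed.

Lemma maxexp_of_In n k l : In l (tuples n k) -> In k l -> maxexp l = k.
Proof.
  intros Hl Hkl. change (maxexp l) with (list_max l). apply Nat.le_antisymm.
  - apply list_max_le, Forall_forall. intros e He; eapply tuples_bounded; eauto.
  - apply (proj1 (Forall_forall _ l) (proj1 (list_max_le l _) (Nat.le_refl _)) k Hkl).
Qed.

Lemma top_count_ge_1 k l : In k l -> 1 <= top_count k l.
Proof.
  intro H. apply (count_occ_In Nat.eq_dec) in H. apply (le_INR 1); lia.
Qed.

Lemma pairs_nonneg m : 0 <= INR m * (INR m - 1).
Proof. destruct m as [|m]; [simpl; lra|]. rewrite S_INR. pose proof (pos_INR m). nra. Qed.

Lemma pairs_ge_2 m : (2 <= m)%nat -> 2 <= INR m * (INR m - 1).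
Proof.
  intro H. assert (2 <= INR m) by (apply (le_INR 2) in H; simpl in H; lra). nra.
Qed.

Lemma count_bonferroni m : INR m - INR m * (INR m - 1) / 2 <= 1.
Proof.
  destruct m as [|[|m]]; [simpl; lra | simpl; lra|].
  rewrite !S_INR. pose proof (pos_INR m). nra.
Qed.

(* With a single top coordinate, S_n / 2^k - n k / 2^k - 1 = (T - n k) / 2^k,
   so the deviation event is a deviation of T. *)
Lemma dev_event_single n k eps l : eps > 0 -> top_count k l = 1 ->
  dev_event n k eps l -> 1 < (low_sum k l - INR n * INR k) ^ 2 / (eps * 2 ^ k) ^ 2.
Proof.
  intros He Hc Hd. unfold dev_event in Hd.
  assert (Hw : 0 < 2 ^ k) by (apply pow_lt; lra).
  rewrite (Ssum_split k), Hc in Hd.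
  set (z := (low_sum k l - INR n * INR k) / 2 ^ k).
  replace ((1 * 2 ^ k + low_sum k l) / 2 ^ k - INR n * INR k / 2 ^ k - 1) with z in Hd
    by (unfold z; field; lra).
  replace ((low_sum k l - INR n * INR k) ^ 2 / (eps * 2 ^ k) ^ 2) with (z ^ 2 / eps ^ 2)
    by (unfold z; field; lra).
  assert (Hz : eps ^ 2 < z ^ 2) by (rewrite <- (pow2_abs z); nra).
  apply (Rmult_lt_reg_r (eps ^ 2)); [nra|]. unfold Rdiv; rewrite Rmult_assoc, Rinv_l; nra.
Qed.

(* Pointwise upper bound for the indicator of {X_n^* = 2^k} /\ deviation:
   Chebyshev when C = 1, and C (C - 1) >= 2 when C >= 2. *)
Lemma dev_indicator_bound n k eps l : (1 <= k)%nat -> eps > 0 ->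
  (if Nat.eq_dec (maxexp l) k then if dev_event_dec n k eps l then 1 else 0 else 0)
  <= top_count k l * ((low_sum k l - INR n * INR k) ^ 2 / (eps * 2 ^ k) ^ 2)
     + top_count k l * (top_count k l - 1).
Proof.
  intros Hk He.
  assert (Hq : 0 <= (low_sum k l - INR n * INR k) ^ 2 / (eps * 2 ^ k) ^ 2).
  { apply Rmult_le_pos; [apply pow2_ge_0 | apply Rlt_le, Rinv_0_lt_compat].
    apply pow_lt, Rmult_lt_0_compat; [lra | apply pow_lt; lra]. }
  assert (Hp := pairs_nonneg (count_occ Nat.eq_dec l k)). fold (top_count k l) in Hp.
  assert (Hc0 : 0 <= top_count k l) by apply pos_INR.
  destruct (Nat.eq_dec (maxexp l) k) as [Hm|]; [destruct (dev_event_dec n k eps l) as [Hd|]|];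
    [| nra | nra].
  assert (Hin : 1 <= top_count k l)
    by (apply top_count_ge_1; rewrite <- Hm; apply maxexp_In; lia).
  destruct (count_occ Nat.eq_dec l k) as [|[|m]] eqn:Hcount;
    unfold top_count in *; rewrite Hcount in *.
  - simpl in Hin; lra.
  - pose proof (dev_event_single n k eps l He ltac:(unfold top_count; now rewrite Hcount) Hd).
    change (INR 1) with 1. lra.
  - pose proof (pairs_ge_2 (S (S m)) ltac:(lia)). nra.
Qed.

Lemma top_indicator_lower n k l : In l (tuples n k) ->
  top_count k l - top_count k l * (top_count k l - 1) / 2
  <= if Nat.eq_dec (maxexp l) k then 1 else 0.
Proof.
  intro Hl. destruct (Nat.eq_dec (maxexp l) k) as [Hm|Hm].
  - apply count_bonferroni.
  - assert (Hout : ~ In k l) by (intro Hin; apply Hm, (maxexp_of_In n k l Hl Hin)).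
    apply (count_occ_not_In Nat.eq_dec) in Hout.
    unfold top_count; rewrite Hout; simpl; lra.
Qed.

(* k^2 <= 2^(k+1), to absorb the squared mean of T. *)
Lemma sq_le_pow2 k : INR k ^ 2 <= 2 * 2 ^ k.
Proof.
  induction k as [|k IH]; [simpl; lra|].
  destruct k as [|[|[|k]]]; [simpl; lra | simpl; lra | simpl; lra|].
  rewrite (S_INR (S (S (S k)))).
  change (2 ^ S (S (S (S k)))) with (2 * 2 ^ S (S (S k))).
  assert (3 <= INR (S (S (S k)))) by (rewrite !S_INR; pose proof (pos_INR k); lra).
  nra.
Qed.

(* The bound of [E_low_sum_sq] at a = n k, with n - 1 coordinates, is <= 7 n 2^k. *)
Lemma low_sum_moment_arith n k w : 1 <= n <= w -> 1 <= k -> k ^ 2 <= 2 * w ->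
  (n - 1) * (w - 2) + ((n - 1) * (k - 1) - n * k) ^ 2 <= 7 * n * w.
Proof.
  intros Hn Hk Hkw.
  replace (((n - 1) * (k - 1) - n * k) ^ 2) with ((n + k - 1) ^ 2) by ring.
  assert ((n + k - 1) ^ 2 <= 2 * n ^ 2 + 2 * k ^ 2) by (pose proof (pow2_ge_0 (n - k)); nra).
  nra.
Qed.

Lemma numerator_bound n k eps : (1 <= k)%nat -> (1 <= n)%nat -> eps > 0 ->
  INR n <= 2 ^ k ->
  prob_max n k (dev_event n k eps) (dev_event_dec n k eps)
  <= (1 + 7 / eps ^ 2) * (INR n / 2 ^ k) ^ 2.
Proof.
  intros Hk Hn He Hnw.
  destruct n as [|m]; [lia|].
  rewrite prob_max_as_E.
  eapply Rle_trans; [apply E_le; intros l _; apply dev_indicator_bound; auto|].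
  set (w := 2 ^ k) in *. set (a := INR (S m) * INR k).
  assert (Hw : 0 < w) by (apply pow_lt; lra).
  rewrite E_plus.
  pose proof (E_size_biased k m (fun _ t => / (eps * w) ^ 2 * (t - a) ^ 2) Hk) as Hsb.
  cbv beta in Hsb.
  rewrite (E_ext _ _ _ (fun l => top_count k l * (/ (eps * w) ^ 2 * (low_sum k l - a) ^ 2))),
    Hsb, E_scal by (intro l; unfold Rdiv; ring).
  pose proof (E_low_sum_sq k m a Hk) as Hvar.
  pose proof (E_top_pairs k (S m) Hk) as Hpairs. fold w in Hpairs.
  fold w in Hvar |- *.
  assert (Hm : INR m = INR (S m) - 1) by (rewrite S_INR; ring).
  rewrite Hm in Hvar.
  assert (Hvar7 : E k m (fun l => (low_sum k l - a) ^ 2) <= 7 * INR (S m) * w).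
  { eapply Rle_trans; [exact Hvar | apply low_sum_moment_arith].
    - split; [apply (le_INR 1); lia | exact Hnw].
    - apply (le_INR 1); lia.
    - apply sq_le_pow2. }
  assert (Hc : 0 <= INR (S m) * / w * / (eps * w) ^ 2).
  { apply Rmult_le_pos;
      [apply Rmult_le_pos; [apply pos_INR | apply Rlt_le, Rinv_0_lt_compat; lra]|].
    apply Rlt_le, Rinv_0_lt_compat, pow_lt; nra. }
  replace ((1 + 7 / eps ^ 2) * (INR (S m) / w) ^ 2)
    with (INR (S m) * / w * / (eps * w) ^ 2 * (7 * INR (S m) * w) + (INR (S m) / w) ^ 2)
    by (field; lra).
  rewrite <- Rmult_assoc.
  apply Rplus_le_compat; [apply Rmult_le_compat_l|]; assumption.
Qed.

Lemma denominator_bound n k : (1 <= k)%nat ->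
  INR n / 2 ^ k - 3 / 2 * (INR n / 2 ^ k) ^ 2
  <= prob_max n k (fun _ => True) (fun _ => left I).
Proof.
  intro Hk. rewrite prob_max_as_E.
  eapply Rle_trans; [|apply E_le; intros l Hl; apply (top_indicator_lower n k l Hl)].
  rewrite (E_ext _ _ _
    (fun l => top_count k l + (- / 2) * (top_count k l * (top_count k l - 1))))
    by (intro; field).
  rewrite E_plus, E_scal.
  destruct (E_top_count_bounds k n Hk) as [Hlow _]. pose proof (E_top_pairs k n Hk) as Hpairs.
  assert (Hr : 0 < / 2 ^ k) by (apply Rinv_0_lt_compat, pow_lt; lra).
  assert (Hx : 0 <= INR n / 2 ^ k) by (unfold Rdiv; pose proof (pos_INR n); nra).
  assert (INR n / 2 ^ k * ((INR n - 1) / 2 ^ k) <= (INR n / 2 ^ k) ^ 2).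
  { unfold Rdiv at 2 3. nra. }
  nra.
Qed.

Lemma prob_max_nonneg n k A (Adec : forall l, {A l} + {~ A l}) : 0 <= prob_max n k A Adec.
Proof.
  rewrite prob_max_as_E.
  apply Rle_trans with (E k n (fun _ => 0)); [rewrite E_mass; lra|].
  apply E_le; intros l _. destruct (Nat.eq_dec (maxexp l) k); [destruct (Adec l)|]; lra.
Qed.

Lemma cond_prob_bound n k eps : (1 <= k)%nat -> (1 <= n)%nat -> eps > 0 ->
  INR n / 2 ^ k <= 1 / 3 ->
  0 <= cond_prob n k (dev_event n k eps) (dev_event_dec n k eps)
    <= 2 * (1 + 7 / eps ^ 2) * (INR n / 2 ^ k).
Proof.
  intros Hk Hn He Hx. set (x := INR n / 2 ^ k) in *.
  assert (Hx0 : 0 < x).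
  { unfold x, Rdiv. apply Rmult_lt_0_compat; [apply (lt_INR 0); lia|].
    apply Rinv_0_lt_compat, pow_lt; lra. }
  assert (Hnw : INR n <= 2 ^ k).
  { assert (0 < 2 ^ k) by (apply pow_lt; lra).
    unfold x in Hx. apply (Rmult_le_compat_r (2 ^ k)) in Hx; [|lra].
    unfold Rdiv in Hx. rewrite Rmult_assoc, Rinv_l in Hx; lra. }
  pose proof (numerator_bound n k eps Hk Hn He Hnw) as Hnum.
  pose proof (denominator_bound n k Hk) as Hden.
  pose proof (prob_max_nonneg n k _ (dev_event_dec n k eps)) as Hnum0.
  fold x in Hnum, Hden. unfold cond_prob.
  set (N := prob_max n k (dev_event n k eps) _) in *.
  set (D := prob_max n k (fun _ => True) _) in *.
  assert (HD : x / 2 <= D) by nra.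
  split; [apply Rle_mult_inv_pos; lra|].
  apply (Rmult_le_reg_r D); [lra|].
  unfold Rdiv; rewrite Rmult_assoc, Rinv_l by lra.
  assert (0 < 7 / eps ^ 2) by (apply Rdiv_lt_0_compat; nra).
  nra.
Qed.

Lemma ratio_eventually_small (k : nat -> nat) :
  (forall M : R, exists N : nat, forall n : nat, (n >= N)%nat -> 2 ^ (k n) / INR n > M) ->
  forall eta, eta > 0 ->
  exists N : nat, forall n : nat, (n >= N)%nat -> (1 <= n)%nat /\ INR n / 2 ^ (k n) < eta.
Proof.
  intros hgrow eta Heta. destruct (hgrow (/ eta)) as [N0 HN0].
  exists (Nat.max N0 1). intros n Hn. split; [lia|].
  specialize (HN0 n ltac:(lia)).
  assert (Hn0 : 0 < INR n) by (apply (lt_INR 0); lia).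
  assert (Hw : 0 < 2 ^ k n) by (apply pow_lt; lra).
  replace (INR n / 2 ^ k n) with (/ (2 ^ k n / INR n)) by (field; lra).
  assert (Hinv : 0 < / eta) by (apply Rinv_0_lt_compat; lra).
  rewrite <- (Rinv_inv eta).
  apply Rinv_lt_contravar; [apply Rmult_lt_0_compat|]; lra.
Qed.

Theorem proposition3 (k : nat -> nat) (hk : forall n, (1 <= k n)%nat)
  (hgrow : forall M : R, exists N : nat, forall n : nat, (n >= N)%nat ->
             2 ^ (k n) / INR n > M) :
  forall eps : R, eps > 0 ->
    Un_cv (fun n => cond_prob n (k n) (dev_event n (k n) eps)
                      (dev_event_dec n (k n) eps)) 0.
Proof.
  intros eps He d Hd.
  set (c := 2 * (1 + 7 / eps ^ 2)).
  assert (Hc : 0 < c).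
  { assert (0 < 7 / eps ^ 2) by (apply Rdiv_lt_0_compat; nra). unfold c; lra. }
  destruct (ratio_eventually_small k hgrow (Rmin (1 / 3) (d / (2 * c))))
    as [N HN]; [apply Rmin_pos; [lra | apply Rdiv_lt_0_compat; lra]|].
  exists N; intros n Hn. destruct (HN n Hn) as [Hn1 Hx].
  pose proof (Rmin_l (1 / 3) (d / (2 * c))) as Hthird.
  pose proof (Rmin_r (1 / 3) (d / (2 * c))) as Hsmall.
  destruct (cond_prob_bound n (k n) eps (hk n) Hn1 He ltac:(lra)) as [Hpos Hbound].
  fold c in Hbound.
  unfold R_dist. rewrite Rminus_0_r, Rabs_pos_eq by exact Hpos.
  assert (c * (INR n / 2 ^ k n) < c * (d / (2 * c))) by (apply Rmult_lt_compat_l; lra).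
  replace (c * (d / (2 * c))) with (d / 2) in * by (field; lra).
  lra.
Qed.
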